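(* Let $\mathbb{K}$ be a field of characteristic $0$ and let $L=\sum_{i=0}^{J}a_i(n)\sigma^i$ with $a_i(n)\in\mathbb{K}[n]$ not all zero, and let $d_L=\max_{0\le i\le J}\{\deg a_i(n)\}$. Then $\deg L\le d_L$, and if $\deg L=d_L$ then $L$ is nondegenerated.
   Context: $\sigma$ is the shift operator. Put $b_k(n)=\sum_{j=k}^{J}\binom{j}{k}a_{J-j}(n+j-J)$ for $0\le k\le J$ and $d=\deg L=\max_{0\le k\le J}\{\deg b_k(n)-k\}$. Let $f(s)=\sum_{k=0}^{J}[n^{d+k}](b_k(n))\,s^{\underline{k}}$, where $[n^m](b)$ is the coefficient of $n^m$ in $b$ and $s^{\underline{k}}=s(s-1)\cdots(s-k+1)$, and $R_L=\{s\in\mathbb{N}=\{0,1,2,\dots\}:f(s)=0\}$. $L$ is degenerated if $R_L\neq\emptyset$ and nondegenerated otherwise. *)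

From HB Require Import structures.
From mathcomp Require Import all_boot all_order all_algebra.
Set Implicit Arguments. Unset Strict Implicit. Unset Printing Implicit Defensive.
Import Order.TTheory GRing.Theory Num.Theory.
Local Open Scope ring_scope.

(* The operator L = \sum_{i=0}^J a_i(n) sigma^i is represented by J and the
   coefficient family a : nat -> {poly K} (only a 0, ..., a J are used). *)

Section Defs.
Variable K : fieldType.

Definition coefz (p : {poly K}) (m : int) : K :=
  match m with Posz n => p`_n | Negz _ => 0 end.

Definition bcoef (J : nat) (a : nat -> {poly K}) (k : nat) : {poly K} :=
  \sum_(k <= j < J.+1)
     'C(j, k)%:R *: (a (J - j)%N \Po ('X + ((j%:Z - J%:Z)%:~R)%:P)).

(* The neutral element -J-1 lies strictly below every term
   deg b_k - k >= -J, so it never affects the max when some b_k != 0. *)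
Definition degL (J : nat) (a : nat -> {poly K}) : int :=
  \big[Order.max/ (- (J%:Z) - 1)]_(k < J.+1 | bcoef J a k != 0)
     ((size (bcoef J a k))%:Z - 1 - k%:Z).

Definition dL (J : nat) (a : nat -> {poly K}) : int :=
  ((\max_(i < J.+1) size (a i)).-1)%:Z.

Definition falling (s k : nat) : K := \prod_(i < k) (s%:R - i%:R).

Definition indpoly (J : nat) (a : nat -> {poly K}) (s : nat) : K :=
  \sum_(k < J.+1) coefz (bcoef J a k) (degL J a + k%:Z) * falling s k.

Definition RL (J : nat) (a : nat -> {poly K}) (s : nat) : Prop :=
  indpoly J a s = 0.

Definition degenerated (J : nat) (a : nat -> {poly K}) : Prop :=
  exists s : nat, RL J a s.

Definition nondegenerated (J : nat) (a : nat -> {poly K}) : Prop :=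
  ~ degenerated J a.
End Defs.

From HB Require Import structures.
From mathcomp Require Import all_boot all_order all_algebra.
From mathcomp Require Import zify.
Set Implicit Arguments. Unset Strict Implicit. Unset Printing Implicit Defensive.
Import Order.TTheory GRing.Theory Num.Theory.
Local Open Scope ring_scope.

(* Each b_k is a combination of shifts of the a_i, so deg b_k <= d_L, and
   deg b_k - k <= d_L - 1 for k >= 1.  Hence if deg L = d_L, the coefficient
   [n^(d_L + k)](b_k) vanishes for k >= 1 and f(s) is the constant
   [n^(d_L)](b_0); were it 0, every deg b_k - k would drop below d_L. *)

Section IndicialPolynomial.
Variables (K : fieldType) (J : nat) (a : nat -> {poly K}).

Let maxsize : nat := \max_(i < J.+1) size (a i).

Lemma size_bcoef_le k : (size (bcoef J a k) <= maxsize)%N.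
Proof.
apply: (big_ind (fun p : {poly K} => size p <= maxsize)%N).
- by rewrite size_poly0.
- by move=> p q Hp Hq; rewrite (leq_trans (size_polyD _ _)) // geq_max Hp Hq.
move=> j _; rewrite (leq_trans (size_scale_leq _ _)) //.
rewrite size_comp_poly2 ?size_XaddC //.
have lt_Jj : (J - j < J.+1)%N by rewrite ltnS leq_subr.
rewrite /maxsize.
exact: (@leq_bigmax _ (fun i : 'I_J.+1 => size (a i)) (Ordinal lt_Jj)).
Qed.

Lemma degL_le_dL : degL J a <= dL J a.
Proof.
rewrite /dL -/maxsize; apply: bigmax_le => [|k _]; first by lia.
by have := size_bcoef_le k; lia.
Qed.

Lemma indpoly_degL_eq_dL s :
  degL J a = dL J a -> indpoly J a s = (bcoef J a 0)`_maxsize.-1.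
Proof.
move=> deg_eq; rewrite /indpoly big_ord_recl big1 => [|k _].
  by rewrite addr0 /falling big_ord0 mulr1 deg_eq /= addn0.
rewrite lift0 deg_eq /dL -/maxsize -PoszD /= nth_default ?mul0r //.
by rewrite (leq_trans (size_bcoef_le _)) //; lia.
Qed.

Lemma degL_lt_dL : (bcoef J a 0)`_maxsize.-1 = 0 -> degL J a < dL J a.
Proof.
move=> coef0; have size_b0 : (size (bcoef J a 0) <= maxsize.-1)%N.
  apply/leq_sizeP => j; rewrite leq_eqVlt => /predU1P [<- // | lt_j].
  by rewrite nth_default // (leq_trans (size_bcoef_le 0)) //; lia.
apply: bigmax_lt => [|[[|k] lt_k] _ /=]; rewrite /dL -/maxsize; first by lia.
  move: size_b0; set z := size _; lia.
have := size_bcoef_le k.+1; set z := size _; lia.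
Qed.

End IndicialPolynomial.

Theorem lemma3p2 (K : fieldType) (charK0 : [pchar K] =i pred0)
    (J : nat) (a : nat -> {poly K})
    (a_nz : exists2 i : nat, (i <= J)%N & a i != 0) :
  degL J a <= dL J a /\ (degL J a = dL J a -> nondegenerated J a).
Proof.
split; first exact: degL_le_dL.
move=> deg_eq [s]; rewrite /RL indpoly_degL_eq_dL // => coef0.
by have := degL_lt_dL coef0; rewrite deg_eq ltxx.
Qed.
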